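(* Let $\mathbf{S}$ be $\mathbf{G3CoPC}$ or $\mathbf{G3MPC}$, let $p$ be a propositional variable and let $n\ge 1$ be a natural number. Then both sequents $\Rightarrow \neg^{(2n+1)}p\to\neg p$ and $\Rightarrow \neg^{(2n)}p\leftrightarrow\neg\neg p$ are derivable in $\mathbf{S}$, where $\neg^{(m)}$ denotes $m$ nested applications of $\neg$.
   Context: Formulas are generated from a countable set of propositional variables $p,q,\dots$ and the constant $\top$ by the grammar $\varphi::= p\mid\top\mid\varphi\wedge\varphi\mid\varphi\vee\varphi\mid\varphi\to\varphi\mid\neg\varphi$ (there is no constant $\bot$). $\varphi\leftrightarrow\psi$ abbreviates $(\varphi\to\psi)\wedge(\psi\to\varphi)$. A sequent is an expression $\Gamma\Rightarrow\varphi$ where $\Gamma$ is a finite multiset of formulas and $\varphi$ is a formula (the goal); $\Gamma,\Delta$ denotes multiset union and $\Gamma,\alpha$ denotes $\Gamma$ with one more occurrence of $\alpha$. Rules ($p$ a propositional variable): (ax) $\Gamma,p\Rightarrow p$ (no premises); ($\top$) $\Gamma\Rightarrow\top$ (no premises); ($\to$r) from $\Gamma,\alpha\Rightarrow\beta$ infer $\Gamma\Rightarrow\alpha\to\beta$; ($\to$l) from $\Gamma,\alpha\to\beta\Rightarrow\alpha$ and $\Gamma,\beta\Rightarrow\varphi$ infer $\Gamma,\alpha\to\beta\Rightarrow\varphi$; ($\wedge$r) from $\Gamma\Rightarrow\alpha$ and $\Gamma\Rightarrow\beta$ infer $\Gamma\Rightarrow\alpha\wedge\beta$; ($\wedge$l)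 from $\Gamma,\alpha,\beta\Rightarrow\varphi$ infer $\Gamma,\alpha\wedge\beta\Rightarrow\varphi$; ($\vee$r$_1$), ($\vee$r$_2$) from $\Gamma\Rightarrow\alpha$ (resp. $\Gamma\Rightarrow\beta$) infer $\Gamma\Rightarrow\alpha\vee\beta$; ($\vee$l) from $\Gamma,\alpha\Rightarrow\varphi$ and $\Gamma,\beta\Rightarrow\varphi$ infer $\Gamma,\alpha\vee\beta\Rightarrow\varphi$; (n) from $\Gamma,\neg\alpha,\beta\Rightarrow\alpha$ and $\Gamma,\neg\alpha,\alpha\Rightarrow\beta$ infer $\Gamma,\neg\alpha\Rightarrow\neg\beta$; (nef) from $\Gamma,\neg\alpha\Rightarrow\alpha$ infer $\Gamma,\neg\alpha\Rightarrow\neg\beta$; (copc) from $\Gamma,\neg\alpha,\beta\Rightarrow\alpha$ infer $\Gamma,\neg\alpha\Rightarrow\neg\beta$; (an) from $\Gamma,\alpha\Rightarrow\neg\alpha$ infer $\Gamma\Rightarrow\neg\alpha$. The rules (ax) through ($\vee$l) are the positive rules. The four systems are: $\mathbf{G3N}$ = positive rules + (n); $\mathbf{G3NeF}$ = positive rules + (n) + (nef); $\mathbf{G3CoPC}$ = positive rules + (copc); $\mathbf{G3MPC}$ = positive rules + (copc) + (an). None of them contains weakening, contraction or cut as a rule. A derivation is a finite tree of rule instances with leaves instances of (ax) or ($\top$); its height is the number of inference steps on a longest branch. A sequent is derivable if it has a derivation; a formula $\varphi$ is a theorem if $\Rightarrow\varphi$ (empty antecedent) is derivable. *)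

(* Multisets are represented by lists up to Permutation:
   every rule whose conclusion has antecedent "Gamma, alpha" is stated for any
   list Delta that is a permutation of alpha :: Gamma. *)
From Stdlib Require Import List Permutation.
Import ListNotations.

Inductive form : Type :=
| Var : nat -> form
| Top : form
| And : form -> form -> form
| Or  : form -> form -> form
| Imp : form -> form -> form
| Neg : form -> form.

Definition Iff (a b : form) : form := And (Imp a b) (Imp b a).

Fixpoint negn (m : nat) (a : form) : form :=
  match m with
  | 0 => a
  | S k => Neg (negn k a)
  end.

Inductive system : Type := G3N | G3NeF | G3CoPC | G3MPC.

Definition has_n (S : system) : bool :=
  match S with G3N | G3NeF => true | _ => false end.
Definition has_nef (S : system) : bool :=
  match S with G3NeF => true | _ => false end.
Definition has_copc (S : system) : bool :=
  match S with G3CoPC | G3MPC => true | _ => false end.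
Definition has_an (S : system) : bool :=
  match S with G3MPC => true | _ => false end.

Inductive derivable (S : system) : list form -> form -> Prop :=
| r_ax : forall G D p, Permutation D (Var p :: G) -> derivable S D (Var p)
| r_top : forall D, derivable S D Top
| r_impR : forall G a b, derivable S (a :: G) b -> derivable S G (Imp a b)
| r_impL : forall G D a b phi, Permutation D (Imp a b :: G) ->
    derivable S (Imp a b :: G) a -> derivable S (b :: G) phi ->
    derivable S D phi
| r_andR : forall G a b, derivable S G a -> derivable S G b ->
    derivable S G (And a b)
| r_andL : forall G D a b phi, Permutation D (And a b :: G) ->
    derivable S (a :: b :: G) phi -> derivable S D phi
| r_orR1 : forall G a b, derivable S G a -> derivable S G (Or a b)
| r_orR2 : forall G a b, derivable S G b -> derivable S G (Or a b)
| r_orL : forall G D a b phi, Permutation D (Or a b :: G) ->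
    derivable S (a :: G) phi -> derivable S (b :: G) phi -> derivable S D phi
| r_n : forall G D a b, has_n S = true -> Permutation D (Neg a :: G) ->
    derivable S (Neg a :: b :: G) a -> derivable S (Neg a :: a :: G) b ->
    derivable S D (Neg b)
| r_nef : forall G D a b, has_nef S = true -> Permutation D (Neg a :: G) ->
    derivable S (Neg a :: G) a -> derivable S D (Neg b)
| r_copc : forall G D a b, has_copc S = true -> Permutation D (Neg a :: G) ->
    derivable S (Neg a :: b :: G) a -> derivable S D (Neg b)
| r_an : forall G a, has_an S = true ->
    derivable S (a :: G) (Neg a) -> derivable S G (Neg a).

(* Only the positive rules and the contraposition rule (copc)
     from  Gamma, neg a, b => a  infer  Gamma, neg a => neg b
   are used, so everything holds in any system containing (copc).
     Two applications of (copc) peel two negations off both sides.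
   - Consequently neg^(2i+1) q => neg q (one more (copc) step).
   The theorem then follows: the odd claim is the last fact for q = p, the
   direction neg^(2n) p => neg neg p is the key lemma for q = neg p under a
   (copc) step, and the converse is the odd claim under a (copc) step. *)

From Stdlib Require Import List Permutation Lia.
Import ListNotations.

Lemma derivable_perm S D phi :
  derivable S D phi -> forall D', Permutation D D' -> derivable S D' phi.
Proof.
  induction 1; intros D' HP.
  - eapply r_ax. rewrite <- HP; eassumption.
  - apply r_top.
  - apply r_impR. apply IHderivable. constructor; auto.
  - eapply r_impL; [rewrite <- HP; eassumption | eauto | eauto].
  - apply r_andR; auto.
  - eapply r_andL; [rewrite <- HP; eassumption | eauto].
  - apply r_orR1; auto.
  - apply r_orR2; auto.
  - eapply r_orL; [rewrite <- HP; eassumption | eauto | eauto].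
  - eapply r_n; [eassumption | rewrite <- HP; eassumption | eassumption | eassumption].
  - eapply r_nef; [eassumption | rewrite <- HP; eassumption | eassumption].
  - eapply r_copc; [eassumption | rewrite <- HP; eassumption | eassumption].
  - apply r_an; [assumption |]. apply IHderivable. constructor; assumption.
Qed.

Lemma negn_Neg m q : negn m (Neg q) = Neg (negn m q).
Proof. induction m; simpl; congruence. Qed.

Section Contraposition.

Variable Sy : system.
Hypothesis has_copc_Sy : has_copc Sy = true.

Lemma copc G a b :
  derivable Sy (Neg a :: b :: G) a -> derivable Sy (Neg a :: G) (Neg b).
Proof. intro H. eapply r_copc; [exact has_copc_Sy | reflexivity | exact H]. Qed.

Lemma negn_identity q (q_id : forall G, derivable Sy (q :: G) q) :
  forall k G, derivable Sy (negn k q :: G) (negn k q).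
Proof.
  induction k as [| k IHk]; intros G; simpl; [apply q_id |].
  apply copc.
  apply derivable_perm with (negn k q :: Neg (negn k q) :: G);
    [apply IHk | apply perm_swap].
Qed.

Lemma odd_negation_yields_even q (q_id : forall G, derivable Sy (q :: G) q) :
  forall i G, derivable Sy (negn (S (2 * i)) q :: q :: G) (negn (2 * i) q).
Proof.
  induction i as [| i IHi]; intros G.
  - apply derivable_perm with (q :: Neg q :: G); [apply q_id | apply perm_swap].
  - replace (2 * S i) with (S (S (2 * i))) by lia.
    set (m := 2 * i) in *.
    (* neg^(m+3) q, q => neg neg^(m+1) q  from  neg^(m+3) q, neg^(m+1) q, q => neg^(m+2) q *)
    apply copc.
    (* ... and that from  neg^(m+1) q, neg^(m+1) q, neg^(m+3) q, q => neg^(m) q *)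
    apply derivable_perm with
      (negn (S m) q :: negn (S (S (S m))) q :: q :: G); [| apply perm_swap].
    apply copc.
    apply derivable_perm with
      (negn (S m) q :: q :: negn (S m) q :: negn (S (S (S m))) q :: G);
      [apply IHi |].
    constructor. eapply perm_trans; [apply perm_swap |].
    constructor. apply perm_swap.
Qed.

Lemma odd_negation_implies_neg q (q_id : forall G, derivable Sy (q :: G) q) :
  forall i G, derivable Sy (negn (S (2 * i)) q :: G) (Neg q).
Proof.
  intros i G. apply copc. apply odd_negation_yields_even; exact q_id.
Qed.

End Contraposition.

Lemma var_identity S p G : derivable S (Var p :: G) (Var p).
Proof. eapply r_ax; reflexivity. Qed.

Theorem proposition4p2 :
  forall (S : system), (S = G3CoPC \/ S = G3MPC) ->
  forall (p : nat) (n : nat), 1 <= n ->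
    derivable S nil (Imp (negn (2 * n + 1) (Var p)) (Neg (Var p))) /\
    derivable S nil (Iff (negn (2 * n) (Var p)) (Neg (Neg (Var p)))).
Proof.
  intros Sy HS p n Hn.
  assert (Hc : has_copc Sy = true) by (destruct HS; subst; reflexivity).
  destruct n as [| k]; [lia |].
  split.
  -
    replace (2 * S k + 1) with (S (2 * S k)) by lia.
    apply r_impR. apply odd_negation_implies_neg; [exact Hc | apply var_identity].
  - replace (2 * S k) with (S (S (2 * k))) by lia.
    apply r_andR; apply r_impR.
    + (* neg^(2k+2) p => neg neg p, via the key lemma for q = neg p *)
      apply copc; [exact Hc |].
      pose proof (odd_negation_yields_even Sy Hc (Neg (Var p))
                    (negn_identity Sy Hc (Var p) (var_identity Sy p) 1) k []) as H.
      simpl in H |- *. rewrite !negn_Neg in H. exact H.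
    + (* neg neg p => neg^(2k+2) p, by contraposing neg^(2k+1) p => neg p *)
      apply copc; [exact Hc |].
      apply derivable_perm with [negn (S (2 * k)) (Var p); Neg (Neg (Var p))];
        [| apply perm_swap].
      apply odd_negation_implies_neg; [exact Hc | apply var_identity].
Qed.
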